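(* Let $\Lambda$ be a $\sigma$-finite measure on $\mathcal Y\subseteq\mathbb R$, and let $\{p(y|x,\theta):\theta\in\Theta\}$, $\Theta\subseteq\mathbb R^m$ open, be a parametric family of positive conditional densities with respect to $\Lambda$, differentiable in $\theta$, such that differentiation in $\theta$ under the integral sign is permitted. Fix $\gamma\in\mathbb R\setminus\{0,-1\}$ and define the $\gamma$-expression $$p^{(\gamma)}(y|x,\theta)=\frac{p(y|x,\theta)^{\gamma+1}}{\int_{\mathcal Y}p(\tilde y|x,\theta)^{\gamma+1}\,\mathrm d\Lambda(\tilde y)}$$ (assumed well defined), the $\gamma$-loss $L_\gamma(\theta;\Lambda)=-\frac1n\frac1\gamma\sum_{i=1}^n\{p^{(\gamma)}(Y_i|X_i,\theta)\}^{\gamma/(\gamma+1)}$ and the $\gamma$-estimating function $S_\gamma(\theta;\Lambda)=\partial L_\gamma(\theta;\Lambda)/\partial\theta$. Suppose that, conditionally on $\underline X=(X_1,\dots,X_n)$, each $Y_i$ has density $p(\cdot|X_i,\theta_0)$ for some $\theta_0\in\Theta$. Then $\mathbb E_0[S_\gamma(\theta_0;\Lambda)\mid\underline X]=0$, where $\mathbb E_0$ denotes conditional expectation under these true distributions. *)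

From HB Require Import structures.
From mathcomp Require Import all_boot all_order all_algebra.
From mathcomp Require Import all_classical all_reals all_analysis.
Set Implicit Arguments. Unset Strict Implicit. Unset Printing Implicit Defensive.
Import Order.TTheory GRing.Theory Num.Theory.
Import numFieldNormedType.Exports.
Local Open Scope classical_set_scope.
Local Open Scope ring_scope.

(* p : X -> 'rV[R]_m -> R -> R,  p x th y = p(y | x, theta).
   Lam : measure on the Borel sets of R, D = the sample space \mathcal Y. *)

Definition gamma_norm (R : realType) (X : Type) (m : nat)
  (p : X -> 'rV[R]_m -> R -> R) (Lam : {measure set R -> \bar R}) (D : set R)
  (g : R) (x : X) (th : 'rV[R]_m) : R :=
  Rintegral Lam D (fun t => p x th t `^ (g + 1)).

Definition gamma_expr (R : realType) (X : Type) (m : nat)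
  (p : X -> 'rV[R]_m -> R -> R) (Lam : {measure set R -> \bar R}) (D : set R)
  (g : R) (x : X) (th : 'rV[R]_m) (y : R) : R :=
  p x th y `^ (g + 1) / gamma_norm p Lam D g x th.

Definition gamma_loss (R : realType) (X : Type) (m : nat)
  (p : X -> 'rV[R]_m -> R -> R) (Lam : {measure set R -> \bar R}) (D : set R)
  (g : R) (n : nat) (xs : 'I_n -> X) (ys : 'I_n -> R) (th : 'rV[R]_m) : R :=
  - (n%:R)^-1 * g^-1 *
    \sum_(i < n) (gamma_expr p Lam D g (xs i) th (ys i)) `^ (g / (g + 1)).

Definition gamma_est (R : realType) (X : Type) (m : nat)
  (p : X -> 'rV[R]_m -> R -> R) (Lam : {measure set R -> \bar R}) (D : set R)
  (g : R) (n : nat) (xs : 'I_n -> X) (ys : 'I_n -> R) (th : 'rV[R]_m) : 'rV[R]_m :=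
  \row_(j < m) 'D_(delta_mx 0 j) (gamma_loss p Lam D g xs ys) th.

From HB Require Import structures.
From mathcomp Require Import all_boot all_order all_algebra.
From mathcomp Require Import all_classical all_reals all_analysis measurable_realfun.
From mathcomp Require Import ring.
Import Order.TTheory GRing.Theory Num.Theory.
Import numFieldNormedType.Exports.
Local Open Scope classical_set_scope.
Local Open Scope ring_scope.

(* Write q = p^(g+1), N(th) = \int q dLam and a = g/(g+1), so that the gamma-term
   of one observation is (q/N)^a = q^a N^(-a).  Because (g+1) a = g, its
   directional derivative multiplied by the density p is a N^(-a) (dq - q dN/N):
   the density cancels.  The conditional mean of the derivative is therefore
   a N^(-a) (\int dq dLam - dN), which vanishes since differentiation under the
   integral sign gives dN = \int dq dLam.  Means E f(Y_i) = \int f p dLam are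
   computed by a change of variables for measures with a density; as the
   densities are only constrained on the sample space D, the estimating
   function agrees with the sum of these derivatives only almost surely. *)

Section integral_ae_eq_nonmeasurable.
Local Open Scope ereal_scope.
Context {d} {T : measurableType d} {R : realType} {mu : {measure set T -> \bar R}}.
Import HBNNSimple.

Let ge0_le_integral_ae (f1 f2 : T -> \bar R) :
    (forall x, 0 <= f1 x) -> (forall x, 0 <= f2 x) -> ae_eq mu setT f1 f2 ->
  \int[mu]_x f1 x <= \int[mu]_x f2 x.
Proof.
move=> f10 f20 [N [mN N0 f12N]].
rewrite !ge0_integralTE//; apply: ge_ereal_sup => _ [h /= hf1 <-].
(* a simple function below f1, cut off on the null set N, lies below f2 *)
pose h' := mul_nnsfun h (indic_nnsfun R (measurableC mN)).
have hh' : sintegral mu h = sintegral mu h'.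
  rewrite -!integralT_nnsfun; apply: ae_eq_integral => //=.
  - exact/measurable_EFinP.
  - exact/measurable_EFinP/measurable_funM.
  exists N; split => // x /= Nx; apply: contrapT => nNx; apply: Nx => _.
  by rewrite /mindic indicE mem_set// mulr1.
rewrite hh'; apply: ereal_sup_ubound; exists h' => // x /=.
rewrite /mindic indicE; have [Nx|nNx] := pselect (N x).
  by rewrite memNset ?mulr0//= => /(_ Nx).
rewrite mem_set// mulr1; have <- // : f1 x = f2 x.
by apply: contrapT => f12x; apply/nNx/f12N => /(_ I).
Qed.

(* Unlike [ae_eq_integral], no measurability is assumed: the estimating function
   is arbitrary, possibly non-measurable, off the event that every Y_i is in D. *)
Lemma ae_eq_integralT {f1 f2 : T -> \bar R} : ae_eq mu setT f1 f2 ->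
  \int[mu]_x f1 x = \int[mu]_x f2 x.
Proof.
move=> /ae_eq_funeposneg[f12p f12n]; rewrite integralE [RHS]integralE.
by congr (_ - _); apply/eqP; rewrite eq_le !ge0_le_integral_ae//;
  exact: ae_eq_sym.
Qed.
End integral_ae_eq_nonmeasurable.

Section integral_density.
Local Open Scope ereal_scope.
Context {d} {T : measurableType d} {R : realType}.
Context {mu nu : {measure set T -> \bar R}} {g : T -> R}.
Hypotheses (g_ge0 : forall x, (0 <= g x)%R) (mg : measurable_fun setT g)
  (nuE : forall A, measurable A -> nu A = \int[mu]_(x in A) (g x)%:E).
Import HBNNSimple.

Let integral_density_indic A : measurable A ->
  \int[mu]_x ((\1_A x)%:E * (g x)%:E) = nu A.
Proof.
move=> mA; rewrite nuE// [RHS]integral_mkcond; apply: eq_integral => x _.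
by rewrite epatch_indic /= muleC.
Qed.

Let integral_density_nnsfun (h : {nnsfun T >-> R}) :
  \int[nu]_x (h x)%:E = \int[mu]_x ((h x)%:E * (g x)%:E).
Proof.
rewrite integralT_nnsfun sintegralE.
under [RHS]eq_integral => x _.
  rewrite fimfunE -fsumEFin// ge0_mule_fsuml => [|r]; last first.
    exact: nnfun_muleindic_ge0.
  over.
rewrite /= ge0_integral_fsum//; last 2 first.
- move=> r; apply: emeasurable_funM; last exact/measurable_EFinP.
  exact/measurable_EFinP/measurable_funM.
- by move=> r x _; rewrite mule_ge0 ?nnfun_muleindic_ge0 ?lee_fin.
apply: eq_fsbigr => r /set_mem[x _ <-].
under eq_integral do rewrite EFinM -muleA.
rewrite ge0_integralZl ?integral_density_indic ?lee_fin//.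
- by apply/emeasurable_funM; exact/measurable_EFinP.
- by move=> y _; rewrite mule_ge0 ?lee_fin.
Qed.

Lemma ge0_integral_density (f : T -> \bar R) :
    (forall x, 0 <= f x) -> measurable_fun setT f ->
  \int[nu]_x f x = \int[mu]_x (f x * (g x)%:E).
Proof.
move=> f0 mf; pose h := nnsfun_approx measurableT mf.
have h_cvg x : (EFin \o h ^~ x) @ \oo --> f x by exact: cvg_nnsfun_approx.
have h_nd x : {homo (fun n => (h n x)%:E) : a b / (a <= b)%N >-> a <= b}.
  by move=> a b ab; rewrite lee_fin; exact/lefP/nd_nnsfun_approx.
have mh n : measurable_fun setT (fun x => (h n x)%:E) by exact/measurable_EFinP.
have nu_cvg : \int[nu]_x (h n x)%:E @[n --> \oo] --> \int[nu]_x f x.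
  under [X in _ --> X]eq_integral => x _ do rewrite -(cvg_lim _ (h_cvg x))//.
  by apply: cvg_monotone_convergence => // n x _; rewrite lee_fin.
have mu_cvg : \int[mu]_x ((h n x)%:E * (g x)%:E) @[n --> \oo] -->
    \int[mu]_x (f x * (g x)%:E).
  have hg_cvg x : (h n x)%:E * (g x)%:E @[n --> \oo] --> f x * (g x)%:E.
    by apply: cvgeZr => //; exact: h_cvg.
  under [X in _ --> X]eq_integral => x _ do rewrite -(cvg_lim _ (hg_cvg x))//.
  apply: cvg_monotone_convergence => //.
  - by move=> n; apply: emeasurable_funM => //; exact/measurable_EFinP.
  - by move=> n x _; rewrite mule_ge0 ?lee_fin.
  - move=> x _ a b ab /=; rewrite lee_wpmul2r ?lee_fin//; exact: h_nd.
move: nu_cvg; under eq_fun do rewrite integral_density_nnsfun.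
by move=> /cvg_unique; apply.
Qed.

Lemma integral_density (f : T -> \bar R) : measurable_fun setT f ->
  \int[nu]_x f x = \int[mu]_x (f x * (g x)%:E).
Proof.
move=> mf; rewrite integralE [RHS]integralE.
rewrite !ge0_integral_density//; last 2 first.
- exact: measurable_funeneg.
- exact: measurable_funepos.
congr (_ - _); apply: eq_integral => x _.
- by rewrite !funeposE maxe_pMl ?mul0e ?lee_fin.
- by rewrite !funenegE maxe_pMl ?mul0e ?mulNe ?lee_fin.
Qed.
End integral_density.

Section expectation_density.
Local Open Scope ereal_scope.
Context {d} {Omega : measurableType d} {R : realType} {P : probability Omega R}.
Context {Lam : {measure set R -> \bar R}} {D : set R} {q : R -> R}.
Context {Y : {mfun Omega >-> R}}.
Hypotheses (mD : measurable D) (q_ge0 : forall y, D y -> (0 <= q y)%R)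
  (mq : measurable_fun D q)
  (Y_law : forall A, measurable A ->
     distribution P Y A = \int[Lam]_(y in A `&` D) (q y)%:E).

Let distribution_density A : measurable A ->
  distribution P Y A = \int[Lam]_(y in A) ((q \_ D) y)%:E.
Proof.
move=> mA; rewrite Y_law// integral_mkcondr; apply: eq_integral => y _.
by rewrite !patchE; case: ifP.
Qed.

Let mqD : measurable_fun setT (q \_ D).
Proof. exact/(measurable_restrictT _ _).1. Qed.

Let qD_ge0 y : (0 <= (q \_ D) y)%R.
Proof. by rewrite patchE; case: ifPn => // /set_mem/q_ge0. Qed.

Let integral_patch_density (f : R -> R) (h : R -> \bar R) :
  \int[Lam]_y (h ((f \_ D) y) * ((q \_ D) y)%:E) =
  \int[Lam]_(y in D) (h (f y) * (q y)%:E).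
Proof.
rewrite [RHS]integral_mkcond; apply: eq_integral => y _; rewrite !patchE.
by case: ifPn => //= _; rewrite mule0.
Qed.

Lemma integrable_comp_density {f : R -> R} : measurable_fun D f ->
    Lam.-integrable D (fun y => (f y * q y)%:E) ->
  P.-integrable setT (fun w => ((f \_ D) (Y w))%:E).
Proof.
move=> mf /integrableP[_ fq_fin].
have mfD : measurable_fun setT (f \_ D) by exact/(measurable_restrictT _ _).1.
apply/integrableP; split; first exact/measurable_EFinP/measurableT_comp.
rewrite -(@ge0_integral_distribution _ _ _ _ _ P Y
  (fun y => `|((f \_ D) y)%:E|))//; last exact/measurableT_comp/measurable_EFinP.
rewrite (ge0_integral_density qD_ge0 mqD distribution_density)//; last first.
  exact/measurableT_comp/measurable_EFinP.
rewrite (integral_patch_density f (fun r => `|r%:E|)).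
under eq_integral => y /set_mem Dy.
  rewrite /= -[in q y](ger0_norm (q_ge0 _ Dy)) -EFinM -normrM; over.
exact: fq_fin.
Qed.

Lemma expectation_comp_density {f : R -> R} : measurable_fun D f ->
    Lam.-integrable D (fun y => (f y * q y)%:E) ->
  'E_P[(f \_ D) \o Y] = \int[Lam]_(y in D) (f y * q y)%:E.
Proof.
move=> mf fq_int; rewrite unlock.
have mfD : measurable_fun setT (f \_ D) by exact/(measurable_restrictT _ _).1.
rewrite -(@integral_distribution _ _ _ _ _ P Y (EFin \o (f \_ D)))//; last 2 first.
- exact/measurable_EFinP.
- exact: integrable_comp_density.
rewrite (integral_density qD_ge0 mqD distribution_density); last exact/measurable_EFinP.
rewrite (integral_patch_density f EFin).
by apply: eq_integral => y _; rewrite EFinM.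
Qed.
End expectation_density.

Lemma integral_gt0 d (T : measurableType d) (R : realType)
    (mu : {measure set T -> \bar R}) (D : set T) (f : T -> R) :
    measurable D -> measurable_fun D f -> (forall x, D x -> 0 < f x) ->
  mu D != 0%E -> (0 < \int[mu]_(x in D) (f x)%:E)%E.
Proof.
move=> mD mf f_gt0 muD; rewrite lt0e integral_ge0 ?andbT; last first.
  by move=> x /f_gt0/ltW; rewrite lee_fin.
apply: contra muD => /eqP intf0.
have mEf : measurable_fun D (EFin \o f) by exact/measurable_EFinP.
have [|N [mN N0 fN]] := (ae_eq_integral_abs mu mD mEf).1.
  by rewrite -intf0; apply: eq_integral => x /set_mem/f_gt0/ltW fx0; rewrite gee0_abs.
apply/eqP; apply: subset_measure0 N0 => // x Dx; apply: fN => /(_ Dx) /= /eqP.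
by rewrite eqe gt_eqF ?f_gt0.
Qed.

Lemma Rintegral_gt0 d (T : measurableType d) (R : realType)
    (mu : {measure set T -> \bar R}) (D : set T) (f : T -> R) :
    measurable D -> mu.-integrable D (EFin \o f) -> (forall x, D x -> 0 < f x) ->
  mu D != 0%E -> 0 < Rintegral mu D f.
Proof.
move=> mD fi f_gt0 muD; apply/fine_gt0/andP; split.
  by apply: integral_gt0 => //; exact/measurable_EFinP/(measurable_int _ fi).
by rewrite ltey_eq integrable_fin_num.
Qed.

Lemma is_derive_comp {R : realType} {V : normedModType R} {f : V -> R} {F : R -> R}
    {x} v {dF} :
  differentiable f x -> is_derive (f x) 1 F dF ->
  is_derive x v (F \o f) (dF * 'D_v f x).
Proof.
move=> df [/derivable1_diffP dF1 <-].
have dFf : differentiable (F \o f) x by exact: differentiable_comp.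
apply: DeriveDef; first exact: diff_derivable.
by rewrite !deriveE// diff_comp// /= diff1E// scale1r mulrC.
Qed.

Lemma is_derive_powR {R : realType} {V : normedModType R} {f : V -> R} {x} v r :
  differentiable f x -> 0 < f x ->
  is_derive x v (fun t => f t `^ r) (r * f x `^ (r - 1) * 'D_v f x).
Proof. by move=> df fx_gt0; exact: (is_derive_comp v df (is_derive1_powR r fx_gt0)). Qed.

Lemma differentiable_powR {R : realType} {V : normedModType R} {f : V -> R} {x} r :
  differentiable f x -> 0 < f x -> differentiable (fun t => f t `^ r) x.
Proof.
move=> df fx_gt0; have [/derivable1_diffP dP _] := is_derive1_powR r fx_gt0.
exact: (differentiable_comp df dP).
Qed.

Section gamma_score.
Context {R : realType} {X : Type} {m : nat}.
Context {p : X -> 'rV[R]_m -> R -> R} {Lam : {measure set R -> \bar R}}.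
Context {D : set R} {g : R}.
Local Notation N := (gamma_norm p Lam D g).
Local Notation a := (g / (g + 1)).

Lemma gamma_norm_ge0 x t : 0 <= N x t.
Proof. by apply: Rintegral_ge0 => y _; exact: powR_ge0. Qed.

Lemma gamma_expr_powRE x t y :
  gamma_expr p Lam D g x t y `^ a = p x t y `^ (g + 1) `^ a * N x t `^ (- a).
Proof.
rewrite /gamma_expr powRM ?powR_ge0 ?invr_ge0 ?gamma_norm_ge0//.
by rewrite -[(N x t)^-1]powR_inv1 ?gamma_norm_ge0// -[(N x t `^ _) `^ _]powRrM mulN1r.
Qed.

Hypothesis g1 : g != -1.

Lemma is_derive_gamma_expr_powR {x th} v {y} :
    0 < p x th y -> differentiable (fun t => p x t y) th ->
    0 < N x th -> differentiable (N x) th ->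
  is_derive th v (fun t => gamma_expr p Lam D g x t y `^ a)
    (a * N x th `^ (- a) * ('D_v (fun t => p x t y `^ (g + 1)) th
       - 'D_v (N x) th / N x th * p x th y `^ (g + 1)) / p x th y).
Proof.
move=> p_gt0 dp N_gt0 dN; set q := fun t => p x t y `^ (g + 1).
have g10 : g + 1 != 0 by rewrite addr_eq0.
have dq := differentiable_powR (g + 1) dp p_gt0.
have -> : (fun t => gamma_expr p Lam D g x t y `^ a) =
    (fun t => q t `^ a) * (fun t => N x t `^ (- a)).
  by apply/funext => t; rewrite gamma_expr_powRE.
have hq := is_derive_powR v a dq (powR_gt0 (g + 1) p_gt0).
have hN := is_derive_powR v (- a) dN N_gt0.
apply: is_derive_eq (is_deriveM hq hN) _; rewrite /GRing.scale /=.
have qa : q th `^ a = p x th y `^ g by rewrite -powRrM mulrC divfK.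
have qa1 : q th `^ (a - 1) = (p x th y)^-1.
  by rewrite -powRrM (_ : _ * _ = -1) ?powR_inv1 ?ltW//; field.
have q_pg : p x th y `^ (g + 1) = p x th y `^ g * p x th y.
  by rewrite powRD ?powRr1 ?ltW// (gt_eqF p_gt0) implybT.
have Na1 : N x th `^ (- a - 1) = N x th `^ (- a) / N x th.
  by rewrite powRD ?powR_inv1 ?ltW// (gt_eqF N_gt0) implybT.
rewrite qa qa1 Na1 /q q_pg; field.
by rewrite (gt_eqF p_gt0) (gt_eqF N_gt0).
Qed.

Lemma derive_gamma_loss n (xs : 'I_n -> X) (ys : 'I_n -> R) th v :
    (forall i, derivable (fun t => gamma_expr p Lam D g (xs i) t (ys i) `^ a) th v) ->
  'D_v (gamma_loss p Lam D g xs ys) th =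
  - n%:R^-1 * g^-1 *
    \sum_(i < n) 'D_v (fun t => gamma_expr p Lam D g (xs i) t (ys i) `^ a) th.
Proof.
move=> dterm.
pose term i t := gamma_expr p Lam D g (xs i) t (ys i) `^ a.
have -> : gamma_loss p Lam D g xs ys = (- n%:R^-1 * g^-1) \*: \sum_(i < n) term i.
  by apply/funext => t; rewrite /gamma_loss fct_sumE.
have dloss : is_derive th v ((- n%:R^-1 * g^-1) \*: \sum_(i < n) term i)
    ((- n%:R^-1 * g^-1) *: \sum_(i < n) 'D_v (term i) th).
  by apply: is_deriveZ; apply: is_derive_sum => i; exact: derivableP (dterm i).
by rewrite (@derive_val _ _ _ _ _ _ _ dloss).
Qed.
End gamma_score.

Section gamma_score_unbiased.
Context {R : realType} {X : Type} {m : nat}.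
Context {p : X -> 'rV[R]_m -> R -> R} {Lam : {measure set R -> \bar R}}.
Context {D : set R} {g : R} {x : X} {th v : 'rV[R]_m}.
Local Notation N := (gamma_norm p Lam D g x).
Local Notation a := (g / (g + 1)).
Local Notation q y := (fun t => p x t y `^ (g + 1)).
Hypotheses (mD : measurable D) (g1 : g != -1)
  (p_gt0 : forall y, D y -> 0 < p x th y) (mp : measurable_fun D (p x th))
  (p_dens : (\int[Lam]_(y in D) (p x th y)%:E = 1)%E)
  (p_diff : forall y, D y -> differentiable (fun t => p x t y) th)
  (N_diff : differentiable N th)
  (q_int : Lam.-integrable D (fun y => (q y th)%:E))
  (dq_int : Lam.-integrable D (fun y => ('D_v (q y) th)%:E))
  (dN_E : 'D_v N th = Rintegral Lam D (fun y => 'D_v (q y) th)).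
Context {dO} {Omega : measurableType dO} {P : probability Omega R}.
Context {Y : {mfun Omega >-> R}}.
Hypothesis Y_law : forall A, measurable A ->
  distribution P Y A = (\int[Lam]_(y in A `&` D) (p x th y)%:E)%E.

Let gamma_norm_gt0 : 0 < N th.
Proof.
apply: Rintegral_gt0 => // [y Dy|]; first exact/powR_gt0/p_gt0.
apply/eqP => LamD0; move: p_dens; rewrite null_set_integral//.
  by move/esym/eqP; rewrite onee_eq0.
exact/measurable_EFinP.
Qed.

Let score y := 'D_v (fun t => gamma_expr p Lam D g x t y `^ a) th.

Let score_density y : D y ->
  score y * p x th y = a * N th `^ (- a) * ('D_v (q y) th - 'D_v N th / N th * q y th).
Proof.
move=> Dy; rewrite /score.
have [_ ->] := is_derive_gamma_expr_powR g1 v (p_gt0 _ Dy) (p_diff _ Dy) gamma_norm_gt0 N_diff.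
by rewrite divfK// gt_eqF// p_gt0.
Qed.

Let qZ_int c : Lam.-integrable D (EFin \o (fun y => c * q y th)).
Proof. by have := integrableZl mD c q_int; apply: eq_integrable. Qed.

Let dq_sub_int :
  Lam.-integrable D (EFin \o (fun y => 'D_v (q y) th - 'D_v N th / N th * q y th)).
Proof. by have := integrableB mD dq_int (qZ_int ('D_v N th / N th)); apply: eq_integrable. Qed.

Let score_density_integrable : Lam.-integrable D (fun y => (score y * p x th y)%:E).
Proof.
have := integrableZl mD (a * N th `^ (- a)) dq_sub_int.
by apply: eq_integrable => // y /set_mem Dy; rewrite score_density.
Qed.

Let measurable_score : measurable_fun D score.
Proof.
have mscore_p : measurable_fun D (fun y => score y * p x th y).
  exact: (measurable_EFinP _ _).1 (measurable_int _ score_density_integrable).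
have mp_inv : measurable_fun D (fun y => p x th y `^ (-1)).
  exact: measurableT_comp (measurable_powR _) mp.
apply: eq_measurable_fun (measurable_funM mscore_p mp_inv) => y /set_mem Dy.
by rewrite /= powR_inv1 ?mulfK ?gt_eqF ?ltW ?p_gt0.
Qed.

Let p_ge0 y : D y -> 0 <= p x th y.
Proof. by move=> /p_gt0/ltW. Qed.

Lemma gamma_score_unbiased :
  [/\ forall y, D y -> derivable (fun t => gamma_expr p Lam D g x t y `^ a) th v,
      P.-integrable setT (fun w => ((score \_ D) (Y w))%:E)
    & ('E_P[(score \_ D) \o Y] = 0)%E].
Proof.
split.
- move=> y Dy.
  by have [] := is_derive_gamma_expr_powR g1 v (p_gt0 _ Dy) (p_diff _ Dy)
    gamma_norm_gt0 N_diff.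
- exact: (integrable_comp_density mD p_ge0 mp Y_law measurable_score
    score_density_integrable).
rewrite (expectation_comp_density mD p_ge0 mp Y_law measurable_score
  score_density_integrable).
rewrite -(fineK (integrable_fin_num mD score_density_integrable)); congr EFin.
rewrite -/(Rintegral _ _ _).
under eq_Rintegral => y /set_mem Dy do rewrite score_density//.
rewrite RintegralZl// RintegralB// RintegralZl// -dN_E -/(N th).
by rewrite divfK ?subrr ?mulr0// gt_eqF// gamma_norm_gt0.
Qed.
End gamma_score_unbiased.

Theorem mainTheorem5 (R : realType) (X : Type) (m : nat)
  (Theta : set 'rV[R]_m) (p : X -> 'rV[R]_m -> R -> R)
  (Lam : {measure set R -> \bar R}) (D : set R) (g : R)
  (* sample space \mathcal Y \subseteq R, Lam sigma-finite on it *)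
  (mD : measurable D) (sfLam : sigma_finite D Lam)
  (* Theta open *)
  (oTheta : open Theta)
  (* positive conditional densities w.r.t. Lam *)
  (p_pos : forall x th y, th \in Theta -> y \in D -> 0 < p x th y)
  (p_meas : forall x th, th \in Theta -> measurable_fun D (p x th))
  (p_dens : forall x th, th \in Theta ->
     (\int[Lam]_(y in D) (p x th y)%:E = 1)%E)
  (* differentiable in theta *)
  (p_diff : forall x y, y \in D -> forall th, th \in Theta ->
     differentiable (fun t => p x t y) th)
  (* gamma different from 0 and -1 *)
  (g0 : g != 0) (g1 : g != -1)
  (* the gamma-expression is well defined *)
  (p_int : forall x th, th \in Theta ->
     Lam.-integrable D (fun y => (p x th y `^ (g + 1))%:E))
  (* differentiation in theta under the integral sign is permitted *)
  (p_dui : forall x th, th \in Theta ->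
     differentiable (gamma_norm p Lam D g x) th /\
     forall v : 'rV[R]_m,
       Lam.-integrable D (fun y => ('D_v (fun t => p x t y `^ (g + 1)) th)%:E) /\
       'D_v (gamma_norm p Lam D g x) th =
         Rintegral Lam D (fun y => 'D_v (fun t => p x t y `^ (g + 1)) th))
  (* sample: covariates fixed (conditioning on X), responses random *)
  (n : nat) (xs : 'I_n -> X)
  (dO : measure_display) (Omega : measurableType dO) (P : probability Omega R)
  (Y : 'I_n -> {mfun Omega >-> R})
  (th0 : 'rV[R]_m) (th0_in : th0 \in Theta)
  (* conditionally on X, each Y_i has density p(. | X_i, th0) w.r.t. Lam *)
  (Y_law : forall i (A : set R), measurable A ->
     distribution P (Y i) A = (\int[Lam]_(y in A `&` D) (p (xs i) th0 y)%:E)%E) :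
  forall j : 'I_m,
    ('E_P[fun w => gamma_est p Lam D g xs (fun i => Y i w) th0 ord0 j] = 0)%E.
Proof.
move=> j; set v : 'rV[R]_m := delta_mx 0 j.
pose score i y := 'D_v (fun t => gamma_expr p Lam D g (xs i) t y `^ (g / (g + 1))) th0.
have p_gt0 i y : D y -> 0 < p (xs i) th0 y by move=> /mem_set; exact: p_pos.
have p_diff0 i y : D y -> differentiable (fun t => p (xs i) t y) th0.
  by move=> /mem_set Dy; exact: p_diff.
have p_dui0 i := p_dui (xs i) th0 th0_in.
have obs i := gamma_score_unbiased mD g1 (p_gt0 i) (p_meas _ _ th0_in)
  (p_dens _ _ th0_in) (p_diff0 i) (p_dui0 i).1 (p_int _ _ th0_in)
  ((p_dui0 i).2 v).1 ((p_dui0 i).2 v).2 (Y_law i).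
have Y_in_D : \forall w \ae P, forall i, D (Y i w).
  apply: filter_forall => i; exists (Y i @^-1` ~` D); split => //.
  - rewrite -[X in measurable X]setTI.
    by apply: measurable_funP => //; exact: measurableC.
  - by have := Y_law i _ (measurableC mD); rewrite setICl integral_set0.
have S_ae : ae_eq P setT
    (fun w => (gamma_est p Lam D g xs (fun i => Y i w) th0 ord0 j)%:E)
    (fun w => (- n%:R^-1 * g^-1 * \sum_(i < n) (score i \_ D) (Y i w))%:E).
  apply: filterS Y_in_D => w YD _; rewrite /gamma_est mxE derive_gamma_loss.
    by congr (_ * _)%:E; apply: eq_bigr => i _; rewrite patchE mem_set.
  by move=> i; case: (obs i) => + _ _; apply.
rewrite unlock (ae_eq_integralT S_ae).
under eq_integral do rewrite EFinM -sumEFin.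
rewrite integralZl//; last by apply: integrable_sum => // i; case: (obs i).
rewrite integral_sum//; last by move=> i; case: (obs i).
by rewrite big1 ?mule0// => i _; case: (obs i) => _ _; rewrite unlock.
Qed.
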